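(* Let $\Gamma$ be an ExEff typing context, and write $\Gamma$ also for the map sending each type variable $\alpha$ with $(\alpha{:}\tau)\in\Gamma$ to $\tau$. If $\Gamma \vdash v : T$ in ExEff, then $|\Gamma|_\emptyset \vdash |v|_\Gamma : |T|_\Gamma$ in SkelEff. If $\Gamma \vdash c : \underline{C}$ in ExEff, then $|\Gamma|_\emptyset \vdash |c|_\Gamma : |\underline{C}|_\Gamma$ in SkelEff.
   Context: ExEff. Fix a global signature $\Sigma$ assigning to each operation $\mathtt{Op}$ two closed well-formed ExEff value types, $(\mathtt{Op}:T_1\to T_2)\in\Sigma$. Skeletons $\tau ::= \varsigma \mid \mathtt{Unit} \mid \tau_1\to\tau_2 \mid \tau_1\Rrightarrow\tau_2 \mid \forall\varsigma.\tau$. Dirts $\Delta ::= \delta\mid\emptyset\mid\{\mathtt{Op}\}\cup\Delta$ (identified up to reordering of operations; $\Delta\cup\mathcal{O}$ adds the operations of a finite set $\mathcal{O}$). Value types $T ::= \alpha\mid\mathtt{Unit}\mid T\to\underline{C}\mid\underline{C}_1\Rrightarrow\underline{C}_2\mid\forall\varsigma.T\mid\forall\alpha{:}\tau.T\mid\forall\delta.T\mid\pi\Rightarrow T$; computation types $\underline{C} ::= T\,!\,\Delta$; $\pi ::= T_1\le T_2\mid\Delta_1\le\Delta_2$; $\rho ::= \pi\mid\underline{C}_1\le\underline{C}_2$. Coercions $\gamma ::= \omega\mid\langle\mathtt{Unit}\rangle\mid\langle\alpha\rangle\mid\langle\Delta\rangle\mid\gamma_1\to\gamma_2\mid\gamma_1\Rrightarrow\gamma_2\mid\emptyset_\Delta\mid\{\mathtt{Op}\}\cup\gamma\mid\forall\varsigma.\gamma\mid\forall(\alpha{:}\tau).\gamma\mid\forall\delta.\gamma\mid\pi\Rightarrow\gamma\mid\gamma_1\,!\,\gamma_2$.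 Values $v ::= x\mid\mathtt{unit}\mid\lambda(x{:}T).c\mid h\mid\Lambda\varsigma.v\mid v\,\tau\mid\Lambda(\alpha{:}\tau).v\mid v\,T\mid\Lambda\delta.v\mid v\,\Delta\mid\Lambda(\omega{:}\pi).v\mid v\,\gamma\mid v\triangleright\gamma$; handlers $h ::= \{\mathtt{return}\,(x{:}T)\mapsto c_r,\mathtt{Op}_1\,x\,k\mapsto c_{\mathtt{Op}_1},\dots,\mathtt{Op}_n\,x\,k\mapsto c_{\mathtt{Op}_n}\}$ (distinct $\mathtt{Op}_i$, $\mathcal{O}=\{\mathtt{Op}_i\}$); computations $c ::= \mathtt{return}\,v\mid\mathtt{Op}\,v\,(y{:}T.c)\mid\mathtt{do}\,x\leftarrow c_1;c_2\mid\mathtt{with}\,v\,\mathtt{handle}\,c\mid v_1\,v_2\mid\mathtt{let}\,x=v\,\mathtt{in}\,c\mid c\triangleright\gamma$. Contexts $\Gamma ::= \epsilon\mid\Gamma,\varsigma\mid\Gamma,\alpha{:}\tau\mid\Gamma,\delta\mid\Gamma,x{:}T\mid\Gamma,\omega{:}\pi$; bound variables are fresh. Well-formedness: $\Gamma\vdash\tau$ (free skeleton variables in $\Gamma$, with $\forall\varsigma.\tau$ checked under $\Gamma,\varsigma$); $\Gamma\vdash\Delta$ ($\emptyset$; $\delta\in\Gamma$; $\{\mathtt{Op}\}\cup\Delta$ if $\mathtt{Op}\in\mathrm{dom}\Sigma$ and $\Gamma\vdash\Delta$); $\Gamma\vdash T:\tau$ ($T$ has skeleton $\tau$): $\alpha:\tau$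 if $(\alpha{:}\tau)\in\Gamma$; $\mathtt{Unit}:\mathtt{Unit}$; $T\to\underline{C}:\tau_1\to\tau_2$; $\underline{C}_1\Rrightarrow\underline{C}_2:\tau_1\Rrightarrow\tau_2$; $\pi\Rightarrow T:\tau$ if $\Gamma\vdash\pi$ and $T:\tau$; $\forall\varsigma.T:\forall\varsigma.\tau$ if $\Gamma,\varsigma\vdash T:\tau$; $\forall\alpha{:}\tau_1.T:\tau_2$ if $\Gamma,\alpha{:}\tau_1\vdash T:\tau_2$; $\forall\delta.T:\tau$ if $\Gamma,\delta\vdash T:\tau$; $T!\Delta:\tau$ if $T:\tau$ and $\Gamma\vdash\Delta$. $\Gamma\vdash T_1\le T_2$ and $\Gamma\vdash\underline{C}_1\le\underline{C}_2$ if both sides have a common skeleton; $\Gamma\vdash\Delta_1\le\Delta_2$ if both are well-formed. Coercion typing $\Gamma\vdash\gamma:\rho$: $\omega:\pi$ if $(\omega{:}\pi)\in\Gamma$; $\langle\alpha\rangle:\alpha\le\alpha$ if $\Gamma\vdash\alpha:\tau$; $\langle\Delta\rangle:\Delta\le\Delta$ if $\Gamma\vdash\Delta$; $\langle\mathtt{Unit}\rangle:\mathtt{Unit}\le\mathtt{Unit}$; $\gamma_1\to\gamma_2:T_1\to\underline{C}_1\le T_2\to\underline{C}_2$ if $\gamma_1:T_2\le T_1$, $\gamma_2:\underline{C}_1\le\underline{C}_2$; $\gamma_1\Rrightarrow\gamma_2:\underline{C}_1\Rrightarrow\underline{C}_2\le\underline{C}_3\Rrightarrow\underline{C}_4$ if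 $\gamma_1:\underline{C}_3\le\underline{C}_1$, $\gamma_2:\underline{C}_2\le\underline{C}_4$; $\forall\varsigma.\gamma$, $\forall(\alpha{:}\tau).\gamma$, $\forall\delta.\gamma$ relate the corresponding quantified types if $\gamma:T_1\le T_2$ under the extended context; $\pi\Rightarrow\gamma:(\pi\Rightarrow T_1)\le(\pi\Rightarrow T_2)$ if $\gamma:T_1\le T_2$ and $\Gamma\vdash\pi$; $\emptyset_\Delta:\emptyset\le\Delta$ if $\Gamma\vdash\Delta$; $\gamma_1!\gamma_2:T_1!\Delta_1\le T_2!\Delta_2$ if $\gamma_1:T_1\le T_2$, $\gamma_2:\Delta_1\le\Delta_2$; $\{\mathtt{Op}\}\cup\gamma:\{\mathtt{Op}\}\cup\Delta_1\le\{\mathtt{Op}\}\cup\Delta_2$ if $\gamma:\Delta_1\le\Delta_2$ and $\mathtt{Op}\in\mathrm{dom}\Sigma$. Typing: $x:T$ if $(x{:}T)\in\Gamma$; $\mathtt{unit}:\mathtt{Unit}$; $\lambda(x{:}T).c:T\to\underline{C}$ if $\Gamma,x{:}T\vdash c:\underline{C}$ and $\Gamma\vdash T:\tau$; $v\triangleright\gamma:T_2$ if $v:T_1$, $\gamma:T_1\le T_2$; $\Lambda\varsigma.v:\forall\varsigma.T$, $\Lambda(\alpha{:}\tau).v:\forall\alpha{:}\tau.T$, $\Lambda\delta.v:\forall\delta.T$ if $v:T$ under $\Gamma$ extended by $\varsigma$, $\alpha{:}\tau$, $\delta$ resp.; $\Lambda(\omega{:}\pi).v:\pi\Rightarrow T$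 if $\Gamma,\omega{:}\pi\vdash v:T$ and $\Gamma\vdash\pi$; $v\,\gamma:T$ if $v:\pi\Rightarrow T$, $\gamma:\pi$; $v\,\tau:T[\tau/\varsigma]$ if $v:\forall\varsigma.T$, $\Gamma\vdash\tau$; $v\,T_2:T_1[T_2/\alpha]$ if $v:\forall\alpha{:}\tau.T_1$, $\Gamma\vdash T_2:\tau$; $v\,\Delta:T[\Delta/\delta]$ if $v:\forall\delta.T$, $\Gamma\vdash\Delta$; $h:T_x!(\Delta\cup\mathcal{O})\Rrightarrow T!\Delta$ if $\Gamma,x{:}T_x\vdash c_r:T!\Delta$ and for each $\mathtt{Op}\in\mathcal{O}$, $(\mathtt{Op}:T_1\to T_2)\in\Sigma$ and $\Gamma,x{:}T_1,k{:}T_2\to T!\Delta\vdash c_{\mathtt{Op}}:T!\Delta$; $v_1\,v_2:\underline{C}$ if $v_1:T\to\underline{C}$, $v_2:T$; $\mathtt{let}\,x=v\,\mathtt{in}\,c:\underline{C}$ if $v:T$, $\Gamma,x{:}T\vdash c:\underline{C}$; $\mathtt{return}\,v:T!\emptyset$ if $v:T$; $\mathtt{do}\,x\leftarrow c_1;c_2:T_2!\Delta$ if $c_1:T_1!\Delta$, $\Gamma,x{:}T_1\vdash c_2:T_2!\Delta$; $\mathtt{Op}\,v\,(y{:}T_2.c):T!\Delta$ if $(\mathtt{Op}:T_1\to T_2)\in\Sigma$, $v:T_1$, $\Gamma,y{:}T_2\vdash c:T!\Delta$, $\mathtt{Op}\in\Delta$; $\mathtt{with}\,v\,\mathtt{handle}\,c:\underline{C}_2$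 if $v:\underline{C}_1\Rrightarrow\underline{C}_2$, $c:\underline{C}_1$; $c\triangleright\gamma:\underline{C}_2$ if $c:\underline{C}_1$, $\gamma:\underline{C}_1\le\underline{C}_2$. SkelEff. Types are skeletons $\tau$. Values $v ::= x\mid\mathtt{unit}\mid h\mid\lambda(x{:}\tau).c\mid\Lambda\varsigma.v\mid v\,\tau$; handlers $\{\mathtt{return}\,(x{:}\tau)\mapsto c_r,\mathtt{Op}_i\,x\,k\mapsto c_{\mathtt{Op}_i}\}$; computations $c ::= v_1\,v_2\mid\mathtt{let}\,x=v\,\mathtt{in}\,c\mid\mathtt{return}\,v\mid\mathtt{Op}\,v\,(y{:}\tau.c)\mid\mathtt{do}\,x\leftarrow c_1;c_2\mid\mathtt{with}\,v\,\mathtt{handle}\,c$. Contexts $\epsilon\mid\Gamma,\varsigma\mid\Gamma,x{:}\tau$. The SkelEff signature assigns $\mathtt{Op}:|T_1|_\emptyset\to|T_2|_\emptyset$ when $(\mathtt{Op}:T_1\to T_2)\in\Sigma$. Typing: $x:\tau$ if $(x{:}\tau)\in\Gamma$; $\mathtt{unit}:\mathtt{Unit}$; $\lambda(x{:}\tau_1).c:\tau_1\to\tau_2$ if $\Gamma,x{:}\tau_1\vdash c:\tau_2$ and $\Gamma\vdash\tau_1$; $v\,\tau_2:\tau_1[\tau_2/\varsigma]$ if $v:\forall\varsigma.\tau_1$ and $\Gamma\vdash\tau_2$; $\Lambda\varsigma.v:\forall\varsigma.\tau$ if $\Gamma,\varsigma\vdash v:\tau$; handler $:\tau_x\Rrightarrow\tau$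 if $\Gamma,x{:}\tau_x\vdash c_r:\tau$ and for each $\mathtt{Op}\in\mathcal{O}$ with $\mathtt{Op}:\tau_1\to\tau_2$, $\Gamma,x{:}\tau_1,k{:}\tau_2\to\tau\vdash c_{\mathtt{Op}}:\tau$; $v_1\,v_2:\tau_2$ if $v_1:\tau_1\to\tau_2$, $v_2:\tau_1$; $\mathtt{let}\,x=v\,\mathtt{in}\,c:\tau_2$ if $v:\tau_1$, $\Gamma,x{:}\tau_1\vdash c:\tau_2$; $\mathtt{return}\,v:\tau$ if $v:\tau$; $\mathtt{Op}\,v\,(y{:}\tau_2.c):\tau$ if $\mathtt{Op}:\tau_1\to\tau_2$, $v:\tau_1$, $\Gamma,y{:}\tau_2\vdash c:\tau$; $\mathtt{do}\,x\leftarrow c_1;c_2:\tau_2$ if $c_1:\tau_1$, $\Gamma,x{:}\tau_1\vdash c_2:\tau_2$; $\mathtt{with}\,v\,\mathtt{handle}\,c:\tau_2$ if $v:\tau_1\Rrightarrow\tau_2$, $c:\tau_1$. Erasure, parametrised by a map $\sigma$ from type variables to skeletons ($\sigma\cdot\{\alpha\mapsto\tau\}$ is the update). Values: $|x|_\sigma=x$, $|\mathtt{unit}|_\sigma=\mathtt{unit}$, $|v\triangleright\gamma|_\sigma=|v|_\sigma$, $|\lambda(x{:}T).c|_\sigma=\lambda(x{:}|T|_\sigma).|c|_\sigma$, $|\Lambda\varsigma.v|_\sigma=\Lambda\varsigma.|v|_\sigma$, $|\Lambda(\alpha{:}\tau).v|_\sigma=|v|_{\sigma\cdot\{\alpha\mapsto\tau\}}$,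 $|\Lambda\delta.v|_\sigma=|\Lambda(\omega{:}\pi).v|_\sigma=|v|_\sigma$, $|v\,\tau|_\sigma=|v|_\sigma\,\tau$, $|v\,T|_\sigma=|v\,\Delta|_\sigma=|v\,\gamma|_\sigma=|v|_\sigma$; handlers: annotation $T$ becomes $|T|_\sigma$ and all clause bodies are erased. Computations: erase componentwise ($|v_1v_2|=|v_1|\,|v_2|$, $\mathtt{let}$, $\mathtt{return}$, $\mathtt{Op}\,|v|\,(y{:}|T|_\sigma.|c|)$, $\mathtt{do}$, $\mathtt{with}$) and $|c\triangleright\gamma|_\sigma=|c|_\sigma$. Types: $|\alpha|_\sigma=\sigma(\alpha)$, $|T\to\underline{C}|_\sigma=|T|_\sigma\to|\underline{C}|_\sigma$, $|\underline{C}_1\Rrightarrow\underline{C}_2|_\sigma=|\underline{C}_1|_\sigma\Rrightarrow|\underline{C}_2|_\sigma$, $|\mathtt{Unit}|_\sigma=\mathtt{Unit}$, $|\pi\Rightarrow T|_\sigma=|T|_\sigma$, $|\forall\varsigma.T|_\sigma=\forall\varsigma.|T|_\sigma$, $|\forall(\alpha{:}\tau).T|_\sigma=|T|_{\sigma\cdot\{\alpha\mapsto\tau\}}$, $|\forall\delta.T|_\sigma=|T|_\sigma$, $|T!\Delta|_\sigma=|T|_\sigma$. Contexts: $|\epsilon|_\sigma=\epsilon$, $|\Gamma,\varsigma|_\sigma=|\Gamma|_\sigma,\varsigma$, $|\Gamma,\alpha{:}\tau|_\sigma=|\Gamma|_{\sigma\cdot\{\alpha\mapsto\tau\}}$, $|\Gamma,\delta|_\sigma=|\Gamma|_\sigma$,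 $|\Gamma,x{:}T|_\sigma=|\Gamma|_\sigma,x{:}|T|_\sigma$, $|\Gamma,\omega{:}\pi|_\sigma=|\Gamma|_\sigma$.
   Formalization: Γ is a well-formed context (each entry α:τ, x:T, ω:π well-formed over the entries before it), and the well-formedness of ∀α:τ.T and the typing of Λ(α:τ).v and ∀(α:τ).γ carry the premise Γ ⊢ τ. The statement above fails without it. *)

(* ExEff and SkelEff, with de Bruijn indices (one index space per sort of
   variable: skeleton vars ς, type vars α, dirt vars δ, term vars x,
   coercion vars ω). *)
From HB Require Import structures.
From mathcomp Require Import all_boot.
From mathcomp Require Import finmap.

Set Implicit Arguments.
Unset Strict Implicit.
Unset Printing Implicit Defensive.

Local Open Scope fset_scope.

Inductive skel : Type :=
| SVar  (n : nat)
| SUnit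
| SArr  (t1 t2 : skel)
| SHand (t1 t2 : skel)
| SAll  (t : skel).

Fixpoint sk_shift (c : nat) (s : skel) : skel :=
  match s with
  | SVar n => SVar (if n < c then n else n.+1)
  | SUnit => SUnit
  | SArr a b => SArr (sk_shift c a) (sk_shift c b)
  | SHand a b => SHand (sk_shift c a) (sk_shift c b)
  | SAll b => SAll (sk_shift c.+1 b)
  end.

Fixpoint sk_subst (k : nat) (u : skel) (s : skel) : skel :=
  match s with
  | SVar n => if n < k then SVar n else if n == k then u else SVar n.-1
  | SUnit => SUnit
  | SArr a b => SArr (sk_subst k u a) (sk_subst k u b)
  | SHand a b => SHand (sk_subst k u a) (sk_subst k u b)
  | SAll b => SAll (sk_subst k.+1 (sk_shift 0 u) b)
  end.

Fixpoint sk_wf (n : nat) (s : skel) : bool :=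
  match s with
  | SVar i => i < n
  | SUnit => true
  | SArr a b | SHand a b => sk_wf n a && sk_wf n b
  | SAll b => sk_wf n.+1 b
  end.

(* Dirts: a finite set of operation names plus an optional dirt variable
   tail (None = ∅).  Using a finite set identifies dirts up to
   reordering of operations.  Operation names are nats.                *)
Record dirt : Type := MkDirt { dops : {fset nat}; dvar : option nat }.

Definition dempty : dirt := MkDirt fset0 None.
Definition dadd (op : nat) (D : dirt) : dirt := MkDirt (op |` dops D) (dvar D).
Definition dunion (D : dirt) (O : seq nat) : dirt :=
  MkDirt (dops D `|` [fset x | x in O]) (dvar D).

Definition dr_shift (c : nat) (D : dirt) : dirt :=
  MkDirt (dops D) (omap (fun n => if n < c then n else n.+1) (dvar D)).

Definition dr_subst (k : nat) (D' : dirt) (D : dirt) : dirt :=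
  match dvar D with
  | Some n =>
      if n < k then D
      else if n == k then MkDirt (dops D `|` dops D') (dvar D')
      else MkDirt (dops D) (Some n.-1)
  | None => D
  end.

Inductive vty : Type :=
| TVar  (n : nat)
| TUnit
| TArr  (T : vty) (C : cty)
| THand (C1 C2 : cty)
| TAllS (T : vty)
| TAllA (s : skel) (T : vty)
| TAllD (T : vty)
| TQual (p : cstr) (T : vty)
with cty : Type :=
| CTy (T : vty) (D : dirt)
with cstr : Type :=
| CSub  (T1 T2 : vty)
| CDSub (D1 D2 : dirt).

Inductive rho : Type :=
| RPi (p : cstr)
| RC  (C1 C2 : cty).

Fixpoint vt_shS (c : nat) (T : vty) {struct T} : vty :=
  match T with
  | TVar n => TVar n
  | TUnit => TUnit
  | TArr T C => TArr (vt_shS c T) (ct_shS c C)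
  | THand C1 C2 => THand (ct_shS c C1) (ct_shS c C2)
  | TAllS T => TAllS (vt_shS c.+1 T)
  | TAllA s T => TAllA (sk_shift c s) (vt_shS c T)
  | TAllD T => TAllD (vt_shS c T)
  | TQual p T => TQual (cs_shS c p) (vt_shS c T)
  end
with ct_shS (c : nat) (C : cty) {struct C} : cty :=
  match C with CTy T D => CTy (vt_shS c T) D end
with cs_shS (c : nat) (p : cstr) {struct p} : cstr :=
  match p with
  | CSub T1 T2 => CSub (vt_shS c T1) (vt_shS c T2)
  | CDSub D1 D2 => CDSub D1 D2
  end.

Fixpoint vt_shA (c : nat) (T : vty) {struct T} : vty :=
  match T with
  | TVar n => TVar (if n < c then n else n.+1)
  | TUnit => TUnit
  | TArr T C => TArr (vt_shA c T) (ct_shA c C)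
  | THand C1 C2 => THand (ct_shA c C1) (ct_shA c C2)
  | TAllS T => TAllS (vt_shA c T)
  | TAllA s T => TAllA s (vt_shA c.+1 T)
  | TAllD T => TAllD (vt_shA c T)
  | TQual p T => TQual (cs_shA c p) (vt_shA c T)
  end
with ct_shA (c : nat) (C : cty) {struct C} : cty :=
  match C with CTy T D => CTy (vt_shA c T) D end
with cs_shA (c : nat) (p : cstr) {struct p} : cstr :=
  match p with
  | CSub T1 T2 => CSub (vt_shA c T1) (vt_shA c T2)
  | CDSub D1 D2 => CDSub D1 D2
  end.

Fixpoint vt_shD (c : nat) (T : vty) {struct T} : vty :=
  match T with
  | TVar n => TVar n
  | TUnit => TUnit
  | TArr T C => TArr (vt_shD c T) (ct_shD c C)
  | THand C1 C2 => THand (ct_shD c C1) (ct_shD c C2)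
  | TAllS T => TAllS (vt_shD c T)
  | TAllA s T => TAllA s (vt_shD c T)
  | TAllD T => TAllD (vt_shD c.+1 T)
  | TQual p T => TQual (cs_shD c p) (vt_shD c T)
  end
with ct_shD (c : nat) (C : cty) {struct C} : cty :=
  match C with CTy T D => CTy (vt_shD c T) (dr_shift c D) end
with cs_shD (c : nat) (p : cstr) {struct p} : cstr :=
  match p with
  | CSub T1 T2 => CSub (vt_shD c T1) (vt_shD c T2)
  | CDSub D1 D2 => CDSub (dr_shift c D1) (dr_shift c D2)
  end.

Fixpoint vt_substS (k : nat) (u : skel) (T : vty) {struct T} : vty :=
  match T with
  | TVar n => TVar n
  | TUnit => TUnit
  | TArr T C => TArr (vt_substS k u T) (ct_substS k u C)
  | THand C1 C2 => THand (ct_substS k u C1) (ct_substS k u C2)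
  | TAllS T => TAllS (vt_substS k.+1 (sk_shift 0 u) T)
  | TAllA s T => TAllA (sk_subst k u s) (vt_substS k u T)
  | TAllD T => TAllD (vt_substS k u T)
  | TQual p T => TQual (cs_substS k u p) (vt_substS k u T)
  end
with ct_substS (k : nat) (u : skel) (C : cty) {struct C} : cty :=
  match C with CTy T D => CTy (vt_substS k u T) D end
with cs_substS (k : nat) (u : skel) (p : cstr) {struct p} : cstr :=
  match p with
  | CSub T1 T2 => CSub (vt_substS k u T1) (vt_substS k u T2)
  | CDSub D1 D2 => CDSub D1 D2
  end.

Fixpoint vt_substA (k : nat) (U : vty) (T : vty) {struct T} : vty :=
  match T with
  | TVar n => if n < k then TVar n else if n == k then U else TVar n.-1
  | TUnit => TUnit
  | TArr T C => TArr (vt_substA k U T) (ct_substA k U C)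
  | THand C1 C2 => THand (ct_substA k U C1) (ct_substA k U C2)
  | TAllS T => TAllS (vt_substA k (vt_shS 0 U) T)
  | TAllA s T => TAllA s (vt_substA k.+1 (vt_shA 0 U) T)
  | TAllD T => TAllD (vt_substA k (vt_shD 0 U) T)
  | TQual p T => TQual (cs_substA k U p) (vt_substA k U T)
  end
with ct_substA (k : nat) (U : vty) (C : cty) {struct C} : cty :=
  match C with CTy T D => CTy (vt_substA k U T) D end
with cs_substA (k : nat) (U : vty) (p : cstr) {struct p} : cstr :=
  match p with
  | CSub T1 T2 => CSub (vt_substA k U T1) (vt_substA k U T2)
  | CDSub D1 D2 => CDSub D1 D2
  end.

Fixpoint vt_substD (k : nat) (D' : dirt) (T : vty) {struct T} : vty :=
  match T with
  | TVar n => TVar n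
  | TUnit => TUnit
  | TArr T C => TArr (vt_substD k D' T) (ct_substD k D' C)
  | THand C1 C2 => THand (ct_substD k D' C1) (ct_substD k D' C2)
  | TAllS T => TAllS (vt_substD k D' T)
  | TAllA s T => TAllA s (vt_substD k D' T)
  | TAllD T => TAllD (vt_substD k.+1 (dr_shift 0 D') T)
  | TQual p T => TQual (cs_substD k D' p) (vt_substD k D' T)
  end
with ct_substD (k : nat) (D' : dirt) (C : cty) {struct C} : cty :=
  match C with CTy T D => CTy (vt_substD k D' T) (dr_subst k D' D) end
with cs_substD (k : nat) (D' : dirt) (p : cstr) {struct p} : cstr :=
  match p with
  | CSub T1 T2 => CSub (vt_substD k D' T1) (vt_substD k D' T2)
  | CDSub D1 D2 => CDSub (dr_subst k D' D1) (dr_subst k D' D2)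
  end.

Inductive coe : Type :=
| GVar   (n : nat)
| GUnit
| GTVar  (n : nat)
| GDirt  (D : dirt)
| GArr   (g1 g2 : coe)
| GHand  (g1 g2 : coe)
| GEmpty (D : dirt)
| GOp    (op : nat) (g : coe)
| GAllS  (g : coe)
| GAllA  (s : skel) (g : coe)
| GAllD  (g : coe)
| GQual  (p : cstr) (g : coe)
| GBang  (g1 g2 : coe).

(* ExEff values, computations, operation clauses of handlers.
   In a clause  Op x k ↦ c, the body c is under x (index 1) and k (index 0). *)
Inductive value : Type :=
| VVar  (n : nat)
| VUnit
| VLam  (T : vty) (c : comput)
| VHand (T : vty) (cr : comput) (cls : hcl)
| VLamS (v : value)
| VAppS (v : value) (s : skel)
| VLamA (s : skel) (v : value)
| VAppA (v : value) (T : vty)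
| VLamD (v : value)
| VAppD (v : value) (D : dirt)
| VLamW (p : cstr) (v : value)
| VAppW (v : value) (g : coe)
| VCast (v : value) (g : coe)
with comput : Type :=
| CRet  (v : value)
| COp   (op : nat) (v : value) (T : vty) (c : comput)
| CDo   (c1 c2 : comput)
| CWith (v : value) (c : comput)
| CApp  (v1 v2 : value)
| CLet  (v : value) (c : comput)
| CCast (c : comput) (g : coe)
with hcl : Type :=
| HNil
| HCons (op : nat) (c : comput) (rest : hcl).

Fixpoint cls_ops (h : hcl) : seq nat :=
  match h with HNil => [::] | HCons op _ r => op :: cls_ops r end.

(* Contexts, most recent entry first *)
Inductive entry : Type :=
| ES
| EA (s : skel)
| ED
| EX (T : vty)
| EW (p : cstr).

Definition ctx := seq entry.

Definition is_ES e := if e is ES then true else false.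
Definition is_ED e := if e is ED then true else false.
Definition nS (G : ctx) := count is_ES G.
Definition nD (G : ctx) := count is_ED G.

(* (α_n : τ) ∈ Γ, with τ transported to the current scope *)
Fixpoint lookup_a (G : ctx) (n : nat) : option skel :=
  match G with
  | [::] => None
  | ES :: G => omap (sk_shift 0) (lookup_a G n)
  | EA s :: G => if n is m.+1 then lookup_a G m else Some s
  | _ :: G => lookup_a G n
  end.

Fixpoint lookup_x (G : ctx) (n : nat) : option vty :=
  match G with
  | [::] => None
  | ES :: G => omap (vt_shS 0) (lookup_x G n)
  | EA _ :: G => omap (vt_shA 0) (lookup_x G n)
  | ED :: G => omap (vt_shD 0) (lookup_x G n)
  | EX T :: G => if n is m.+1 then lookup_x G m else Some T
  | EW _ :: G => lookup_x G n
  end.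

Fixpoint lookup_w (G : ctx) (n : nat) : option cstr :=
  match G with
  | [::] => None
  | ES :: G => omap (cs_shS 0) (lookup_w G n)
  | EA _ :: G => omap (cs_shA 0) (lookup_w G n)
  | ED :: G => omap (cs_shD 0) (lookup_w G n)
  | EX _ :: G => lookup_w G n
  | EW p :: G => if n is m.+1 then lookup_w G m else Some p
  end.

Definition sig := nat -> option (vty * vty).
Definition in_dom (S : sig) (op : nat) : bool := isSome (S op).

Section ExEff.
Variable S : sig.

Definition wf_sk (G : ctx) (s : skel) : bool := sk_wf (nS G) s.

Definition wf_dirt (G : ctx) (D : dirt) : Prop :=
  {in dops D, forall op, in_dom S op} /\
  (if dvar D is Some n then n < nD G else true).

Inductive wf_vt : ctx -> vty -> skel -> Prop :=
| WfVar G n s : lookup_a G n = Some s -> wf_vt G (TVar n) s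
| WfUnit G : wf_vt G TUnit SUnit
| WfArr G T C s1 s2 : wf_vt G T s1 -> wf_ct G C s2 -> wf_vt G (TArr T C) (SArr s1 s2)
| WfHand G C1 C2 s1 s2 : wf_ct G C1 s1 -> wf_ct G C2 s2 -> wf_vt G (THand C1 C2) (SHand s1 s2)
| WfQual G p T s : wf_cs G p -> wf_vt G T s -> wf_vt G (TQual p T) s
| WfAllS G T s : wf_vt (ES :: G) T s -> wf_vt G (TAllS T) (SAll s)
| WfAllA G s1 T s2 : wf_sk G s1 -> wf_vt (EA s1 :: G) T s2 -> wf_vt G (TAllA s1 T) s2
| WfAllD G T s : wf_vt (ED :: G) T s -> wf_vt G (TAllD T) s
with wf_ct : ctx -> cty -> skel -> Prop :=
| WfCTy G T D s : wf_vt G T s -> wf_dirt G D -> wf_ct G (CTy T D) s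
with wf_cs : ctx -> cstr -> Prop :=
| WfCSub G T1 T2 s : wf_vt G T1 s -> wf_vt G T2 s -> wf_cs G (CSub T1 T2)
| WfCDSub G D1 D2 : wf_dirt G D1 -> wf_dirt G D2 -> wf_cs G (CDSub D1 D2).

Inductive co_ty : ctx -> coe -> rho -> Prop :=
| CoVar G n p : lookup_w G n = Some p -> co_ty G (GVar n) (RPi p)
| CoTVar G n s : wf_vt G (TVar n) s -> co_ty G (GTVar n) (RPi (CSub (TVar n) (TVar n)))
| CoDirt G D : wf_dirt G D -> co_ty G (GDirt D) (RPi (CDSub D D))
| CoUnit G : co_ty G GUnit (RPi (CSub TUnit TUnit))
| CoArr G g1 g2 T1 T2 C1 C2 :
    co_ty G g1 (RPi (CSub T2 T1)) -> co_ty G g2 (RC C1 C2) ->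
    co_ty G (GArr g1 g2) (RPi (CSub (TArr T1 C1) (TArr T2 C2)))
| CoHand G g1 g2 C1 C2 C3 C4 :
    co_ty G g1 (RC C3 C1) -> co_ty G g2 (RC C2 C4) ->
    co_ty G (GHand g1 g2) (RPi (CSub (THand C1 C2) (THand C3 C4)))
| CoAllS G g T1 T2 :
    co_ty (ES :: G) g (RPi (CSub T1 T2)) ->
    co_ty G (GAllS g) (RPi (CSub (TAllS T1) (TAllS T2)))
| CoAllA G s g T1 T2 :
    wf_sk G s ->
    co_ty (EA s :: G) g (RPi (CSub T1 T2)) ->
    co_ty G (GAllA s g) (RPi (CSub (TAllA s T1) (TAllA s T2)))
| CoAllD G g T1 T2 :
    co_ty (ED :: G) g (RPi (CSub T1 T2)) ->
    co_ty G (GAllD g) (RPi (CSub (TAllD T1) (TAllD T2)))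
| CoQual G p g T1 T2 :
    co_ty G g (RPi (CSub T1 T2)) -> wf_cs G p ->
    co_ty G (GQual p g) (RPi (CSub (TQual p T1) (TQual p T2)))
| CoEmpty G D : wf_dirt G D -> co_ty G (GEmpty D) (RPi (CDSub dempty D))
| CoBang G g1 g2 T1 T2 D1 D2 :
    co_ty G g1 (RPi (CSub T1 T2)) -> co_ty G g2 (RPi (CDSub D1 D2)) ->
    co_ty G (GBang g1 g2) (RC (CTy T1 D1) (CTy T2 D2))
| CoOp G op g D1 D2 :
    co_ty G g (RPi (CDSub D1 D2)) -> in_dom S op ->
    co_ty G (GOp op g) (RPi (CDSub (dadd op D1) (dadd op D2))).

Inductive val_ty : ctx -> value -> vty -> Prop :=
| TyVar G n T : lookup_x G n = Some T -> val_ty G (VVar n) T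
| TyUnit G : val_ty G VUnit TUnit
| TyLam G T c C s : comp_ty (EX T :: G) c C -> wf_vt G T s -> val_ty G (VLam T c) (TArr T C)
| TyCast G v g T1 T2 : val_ty G v T1 -> co_ty G g (RPi (CSub T1 T2)) -> val_ty G (VCast v g) T2
| TyLamS G v T : val_ty (ES :: G) v T -> val_ty G (VLamS v) (TAllS T)
| TyLamA G s v T : wf_sk G s -> val_ty (EA s :: G) v T -> val_ty G (VLamA s v) (TAllA s T)
| TyLamD G v T : val_ty (ED :: G) v T -> val_ty G (VLamD v) (TAllD T)
| TyLamW G p v T : val_ty (EW p :: G) v T -> wf_cs G p -> val_ty G (VLamW p v) (TQual p T)
| TyAppW G v g p T : val_ty G v (TQual p T) -> co_ty G g (RPi p) -> val_ty G (VAppW v g) T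
| TyAppS G v s T : val_ty G v (TAllS T) -> wf_sk G s -> val_ty G (VAppS v s) (vt_substS 0 s T)
| TyAppA G v s T1 T2 : val_ty G v (TAllA s T1) -> wf_vt G T2 s ->
    val_ty G (VAppA v T2) (vt_substA 0 T2 T1)
| TyAppD G v D T : val_ty G v (TAllD T) -> wf_dirt G D -> val_ty G (VAppD v D) (vt_substD 0 D T)
| TyHand G Tx cr cls T D :
    uniq (cls_ops cls) ->
    comp_ty (EX Tx :: G) cr (CTy T D) ->
    cls_ty G T D cls ->
    val_ty G (VHand Tx cr cls) (THand (CTy Tx (dunion D (cls_ops cls))) (CTy T D))
with comp_ty : ctx -> comput -> cty -> Prop :=
| TyApp G v1 v2 T C : val_ty G v1 (TArr T C) -> val_ty G v2 T -> comp_ty G (CApp v1 v2) C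
| TyLet G v c T C : val_ty G v T -> comp_ty (EX T :: G) c C -> comp_ty G (CLet v c) C
| TyRet G v T : val_ty G v T -> comp_ty G (CRet v) (CTy T dempty)
| TyDo G c1 c2 T1 T2 D :
    comp_ty G c1 (CTy T1 D) -> comp_ty (EX T1 :: G) c2 (CTy T2 D) ->
    comp_ty G (CDo c1 c2) (CTy T2 D)
| TyOp G op v T1 T2 c T D :
    S op = Some (T1, T2) -> val_ty G v T1 -> comp_ty (EX T2 :: G) c (CTy T D) ->
    op \in dops D ->
    comp_ty G (COp op v T2 c) (CTy T D)
| TyWith G v c C1 C2 : val_ty G v (THand C1 C2) -> comp_ty G c C1 -> comp_ty G (CWith v c) C2
| TyCCast G c g C1 C2 : comp_ty G c C1 -> co_ty G g (RC C1 C2) -> comp_ty G (CCast c g) C2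
with cls_ty : ctx -> vty -> dirt -> hcl -> Prop :=
| ClNil G T D : cls_ty G T D HNil
| ClCons G T D op c rest T1 T2 :
    S op = Some (T1, T2) ->
    comp_ty (EX (TArr T2 (CTy T D)) :: EX T1 :: G) c (CTy T D) ->
    cls_ty G T D rest ->
    cls_ty G T D (HCons op c rest).

(* well-formed context ⊢ Γ: each entry well-formed w.r.t. the context
   preceding it (freshness of names is automatic with de Bruijn indices) *)
Fixpoint ctx_wf (G : ctx) : Prop :=
  match G with
  | [::] => True
  | ES :: G => ctx_wf G
  | ED :: G => ctx_wf G
  | EA s :: G => wf_sk G s /\ ctx_wf G
  | EX T :: G => (exists s, wf_vt G T s) /\ ctx_wf G
  | EW p :: G => wf_cs G p /\ ctx_wf G
  end.

Definition sig_ok : Prop :=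
  forall op T1 T2, S op = Some (T1, T2) ->
    (exists s1, wf_vt [::] T1 s1) /\ (exists s2, wf_vt [::] T2 s2).

End ExEff.

Inductive svalue : Type :=
| SVVar  (n : nat)
| SVUnit
| SVHand (s : skel) (cr : scomp) (cls : shcl)
| SVLam  (s : skel) (c : scomp)
| SVLamS (v : svalue)
| SVAppS (v : svalue) (s : skel)
with scomp : Type :=
| SCApp  (v1 v2 : svalue)
| SCLet  (v : svalue) (c : scomp)
| SCRet  (v : svalue)
| SCOp   (op : nat) (v : svalue) (s : skel) (c : scomp)
| SCDo   (c1 c2 : scomp)
| SCWith (v : svalue) (c : scomp)
with shcl : Type :=
| SHNil
| SHCons (op : nat) (c : scomp) (rest : shcl).

Fixpoint scls_ops (h : shcl) : seq nat :=
  match h with SHNil => [::] | SHCons op _ r => op :: scls_ops r end.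

Inductive sentry : Type := SES | SEX (s : skel).
Definition sctx := seq sentry.

Definition snS (G : sctx) := count (fun e => if e is SES then true else false) G.

Fixpoint slookup_x (G : sctx) (n : nat) : option skel :=
  match G with
  | [::] => None
  | SES :: G => omap (sk_shift 0) (slookup_x G n)
  | SEX s :: G => if n is m.+1 then slookup_x G m else Some s
  end.

Definition ssig := nat -> option (skel * skel).

Section SkelEff.
Variable S : ssig.

Inductive sval_ty : sctx -> svalue -> skel -> Prop :=
| STyVar G n s : slookup_x G n = Some s -> sval_ty G (SVVar n) s
| STyUnit G : sval_ty G SVUnit SUnit
| STyLam G s1 c s2 : scomp_ty (SEX s1 :: G) c s2 -> sk_wf (snS G) s1 ->
    sval_ty G (SVLam s1 c) (SArr s1 s2)
| STyAppS G v s1 s2 : sval_ty G v (SAll s1) -> sk_wf (snS G) s2 ->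
    sval_ty G (SVAppS v s2) (sk_subst 0 s2 s1)
| STyLamS G v s : sval_ty (SES :: G) v s -> sval_ty G (SVLamS v) (SAll s)
| STyHand G sx cr cls s :
    uniq (scls_ops cls) ->
    scomp_ty (SEX sx :: G) cr s -> scls_ty G s cls ->
    sval_ty G (SVHand sx cr cls) (SHand sx s)
with scomp_ty : sctx -> scomp -> skel -> Prop :=
| STyApp G v1 v2 s1 s2 : sval_ty G v1 (SArr s1 s2) -> sval_ty G v2 s1 -> scomp_ty G (SCApp v1 v2) s2
| STyLet G v c s1 s2 : sval_ty G v s1 -> scomp_ty (SEX s1 :: G) c s2 -> scomp_ty G (SCLet v c) s2
| STyRet G v s : sval_ty G v s -> scomp_ty G (SCRet v) s
| STyOp G op v s1 s2 c s :
    S op = Some (s1, s2) -> sval_ty G v s1 -> scomp_ty (SEX s2 :: G) c s ->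
    scomp_ty G (SCOp op v s2 c) s
| STyDo G c1 c2 s1 s2 : scomp_ty G c1 s1 -> scomp_ty (SEX s1 :: G) c2 s2 -> scomp_ty G (SCDo c1 c2) s2
| STyWith G v c s1 s2 : sval_ty G v (SHand s1 s2) -> scomp_ty G c s1 -> scomp_ty G (SCWith v c) s2
with scls_ty : sctx -> skel -> shcl -> Prop :=
| SClNil G s : scls_ty G s SHNil
| SClCons G s op c rest s1 s2 :
    S op = Some (s1, s2) ->
    scomp_ty (SEX (SArr s2 s) :: SEX s1 :: G) c s ->
    scls_ty G s rest ->
    scls_ty G s (SHCons op c rest).

End SkelEff.

(* Erasure |_|_σ, σ : list of skeletons indexed by type variables      *)
Fixpoint er_vt (sg : seq skel) (T : vty) {struct T} : skel :=
  match T with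
  | TVar n => nth SUnit sg n
  | TUnit => SUnit
  | TArr T C => SArr (er_vt sg T) (er_ct sg C)
  | THand C1 C2 => SHand (er_ct sg C1) (er_ct sg C2)
  | TAllS T => SAll (er_vt (map (sk_shift 0) sg) T)
  | TAllA s T => er_vt (s :: sg) T
  | TAllD T => er_vt sg T
  | TQual _ T => er_vt sg T
  end
with er_ct (sg : seq skel) (C : cty) {struct C} : skel :=
  match C with CTy T _ => er_vt sg T end.

Fixpoint er_val (sg : seq skel) (v : value) {struct v} : svalue :=
  match v with
  | VVar n => SVVar n
  | VUnit => SVUnit
  | VLam T c => SVLam (er_vt sg T) (er_comp sg c)
  | VHand T cr cls => SVHand (er_vt sg T) (er_comp sg cr) (er_hcl sg cls)
  | VLamS v => SVLamS (er_val (map (sk_shift 0) sg) v)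
  | VAppS v s => SVAppS (er_val sg v) s
  | VLamA s v => er_val (s :: sg) v
  | VAppA v _ => er_val sg v
  | VLamD v => er_val sg v
  | VAppD v _ => er_val sg v
  | VLamW _ v => er_val sg v
  | VAppW v _ => er_val sg v
  | VCast v _ => er_val sg v
  end
with er_comp (sg : seq skel) (c : comput) {struct c} : scomp :=
  match c with
  | CRet v => SCRet (er_val sg v)
  | COp op v T c => SCOp op (er_val sg v) (er_vt sg T) (er_comp sg c)
  | CDo c1 c2 => SCDo (er_comp sg c1) (er_comp sg c2)
  | CWith v c => SCWith (er_val sg v) (er_comp sg c)
  | CApp v1 v2 => SCApp (er_val sg v1) (er_val sg v2)
  | CLet v c => SCLet (er_val sg v) (er_comp sg c)
  | CCast c _ => er_comp sg c
  end
with er_hcl (sg : seq skel) (h : hcl) {struct h} : shcl :=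
  match h with
  | HNil => SHNil
  | HCons op c r => SHCons op (er_comp sg c) (er_hcl sg r)
  end.

(* Γ viewed as the map α ↦ τ (in the scope of the whole of Γ) *)
Fixpoint sigma_of (G : ctx) : seq skel :=
  match G with
  | [::] => [::]
  | ES :: G => map (sk_shift 0) (sigma_of G)
  | EA s :: G => s :: sigma_of G
  | _ :: G => sigma_of G
  end.

Fixpoint er_ctx (G : ctx) : sctx :=
  match G with
  | [::] => [::]
  | ES :: G => SES :: er_ctx G
  | EX T :: G => SEX (er_vt (sigma_of G) T) :: er_ctx G
  | _ :: G => er_ctx G
  end.

Definition er_sig (S : sig) : ssig :=
  fun op => omap (fun p => (er_vt [::] p.1, er_vt [::] p.2)) (S op).

(* Erasure forgets dirts, coercions and constraint abstractions, and replaces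
   every type variable by its skeleton.  Typing is preserved by induction on
   derivations: erasure commutes with the shifts and substitutions of all
   three sorts of type-level variables, a well-formed type erases to its
   skeleton, and every coercion relates types with equal erasures, so that
   casts erase to nothing. *)
From mathcomp Require Import all_boot zify.
Set Implicit Arguments.
Unset Strict Implicit.

Definition insert_nth T (c : nat) (x : T) (s : seq T) : seq T := take c s ++ x :: drop c s.

Lemma nth_insert T (x0 x : T) s c n : c <= size s ->
  nth x0 (insert_nth c x s) n =
  if n < c then nth x0 s n else if n == c then x else nth x0 s n.-1.
Proof.
move=> cs; rewrite /insert_nth nth_cat size_takel //.
case: ltnP => [nc | cn]; first by rewrite nth_take.
case: eqP => [-> | nc]; first by rewrite subnn.
have -> : n - c = (n.-1 - c).+1 by lia.
by rewrite /= nth_drop; congr nth; lia.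
Qed.

Lemma map_insert_nth T U (f : T -> U) c x s :
  map f (insert_nth c x s) = insert_nth c (f x) (map f s).
Proof. by rewrite /insert_nth map_cat map_take /= map_drop. Qed.

Lemma insert_nth0 T (x : T) s : insert_nth 0 x s = x :: s.
Proof. by rewrite /insert_nth take0 drop0. Qed.

Ltac case_ifs :=
  repeat match goal with |- context [if ?b then _ else _] =>
    lazymatch b with
    | context [if _ then _ else _] => fail
    | _ => let E := fresh "E" in case E: b => /=
    end
  end.

Lemma sk_shift_shift s c d : c <= d ->
  sk_shift c (sk_shift d s) = sk_shift d.+1 (sk_shift c s).
Proof.
elim: s c d => [n||a IHa b IHb|a IHa b IHb|b IHb] c d cd /=.
- by case_ifs; congr SVar; lia.
- by [].
- by rewrite IHa // IHb.
- by rewrite IHa // IHb.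
- by rewrite IHb.
Qed.

Lemma sk_shiftK c u : cancel (sk_shift c) (sk_subst c u).
Proof.
move=> s; elim: s c u => [n||a IHa b IHb|a IHa b IHb|b IHb] c u /=.
- case_ifs; by [| congr SVar; lia | lia].
- by [].
- by rewrite IHa IHb.
- by rewrite IHa IHb.
- by rewrite IHb.
Qed.

Lemma sk_shift_subst s c k u : c <= k ->
  sk_shift c (sk_subst k u s) = sk_subst k.+1 (sk_shift c u) (sk_shift c s).
Proof.
elim: s c k u => [n||a IHa b IHb|a IHa b IHb|b IHb] c k u ck /=.
- case_ifs; by [| congr SVar; lia | lia].
- by [].
- by rewrite IHa // IHb.
- by rewrite IHa // IHb.
- by rewrite IHb // (sk_shift_shift u (leq0n c)).
Qed.

Lemma sk_wf_shift s n c : sk_wf n s -> sk_wf n.+1 (sk_shift c s).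
Proof.
elim: s n c => [i||a IHa b IHb|a IHa b IHb|b IHb] n c //=.
- by case_ifs; lia.
- by case/andP => /IHa -> /IHb ->.
- by case/andP => /IHa -> /IHb ->.
- exact: IHb.
Qed.

(* [vty] is mutual with [cty]; inlining [T ! D] gives a plain induction on
   value types, which is all erasure needs. *)
Definition vty_flat_ind (P : vty -> Prop)
  (Hvar : forall n, P (TVar n)) (Hunit : P TUnit)
  (Harr : forall T T' D, P T -> P T' -> P (TArr T (CTy T' D)))
  (Hhand : forall T1 D1 T2 D2, P T1 -> P T2 -> P (THand (CTy T1 D1) (CTy T2 D2)))
  (HallS : forall T, P T -> P (TAllS T))
  (HallA : forall s T, P T -> P (TAllA s T))
  (HallD : forall T, P T -> P (TAllD T))
  (Hqual : forall p T, P T -> P (TQual p T)) : forall T, P T :=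
  fix F T := match T with
  | TVar n => Hvar n
  | TUnit => Hunit
  | TArr T (CTy T' D) => Harr T T' D (F T) (F T')
  | THand (CTy T1 D1) (CTy T2 D2) => Hhand T1 D1 T2 D2 (F T1) (F T2)
  | TAllS T => HallS T (F T)
  | TAllA s T => HallA s T (F T)
  | TAllD T => HallD T (F T)
  | TQual p T => Hqual p T (F T)
  end.

Lemma nth_map_skel (f : skel -> skel) sg n :
  f SUnit = SUnit -> nth SUnit (map f sg) n = f (nth SUnit sg n).
Proof. by move=> f0; elim: sg n => [|x sg IH] [|n] //=. Qed.

Lemma er_vt_shS T c sg :
  er_vt (map (sk_shift c) sg) (vt_shS c T) = sk_shift c (er_vt sg T).
Proof.
elim/vty_flat_ind: T c sg => [n||T T' D IH1 IH2|T1 D1 T2 D2 IH1 IH2|T IH|s T IH|T IH|p T IH]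
  c sg /=; rewrite ?IH1 ?IH2 -?IH //.
- by rewrite nth_map_skel.
- by rewrite -!map_comp; congr (SAll (er_vt _ _)); apply: eq_map => x /=; rewrite sk_shift_shift.
Qed.

Lemma er_vt_shA T c x sg : c <= size sg ->
  er_vt (insert_nth c x sg) (vt_shA c T) = er_vt sg T.
Proof.
elim/vty_flat_ind: T c x sg => [n||T T' D IH1 IH2|T1 D1 T2 D2 IH1 IH2|T IH|s T IH|T IH|p T IH]
  c x sg cs /=; rewrite ?IH1 ?IH2 ?IH //.
- rewrite nth_insert //; case_ifs; by [| lia].
- by rewrite map_insert_nth IH ?size_map.
- by rewrite -(IH c.+1 x (s :: sg)).
Qed.

Lemma er_vt_shA0 T x sg : er_vt (x :: sg) (vt_shA 0 T) = er_vt sg T.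
Proof. by rewrite -insert_nth0 er_vt_shA. Qed.

Lemma er_vt_shD T c sg : er_vt sg (vt_shD c T) = er_vt sg T.
Proof.
by elim/vty_flat_ind: T c sg => [n||T T' D IH1 IH2|T1 D1 T2 D2 IH1 IH2|T IH|s T IH|T IH|p T IH]
  c sg /=; rewrite ?IH ?IH1 ?IH2.
Qed.

Lemma er_vt_substD T k D sg : er_vt sg (vt_substD k D T) = er_vt sg T.
Proof.
by elim/vty_flat_ind: T k D sg => [n||T T' D' IH1 IH2|T1 D1 T2 D2 IH1 IH2|T IH|s T IH|T IH|p T IH]
  k D sg /=; rewrite ?IH ?IH1 ?IH2.
Qed.

Lemma er_vt_substS T k u sg :
  er_vt (map (sk_subst k u) sg) (vt_substS k u T) = sk_subst k u (er_vt sg T).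
Proof.
elim/vty_flat_ind: T k u sg => [n||T T' D IH1 IH2|T1 D1 T2 D2 IH1 IH2|T IH|s T IH|T IH|p T IH]
  k u sg /=; rewrite ?IH1 ?IH2 -?IH //.
- by rewrite nth_map_skel.
- by rewrite -!map_comp; congr (SAll (er_vt _ _)); apply: eq_map => x /=; rewrite sk_shift_subst.
Qed.

Lemma er_vt_substA T k U sg : k <= size sg ->
  er_vt sg (vt_substA k U T) = er_vt (insert_nth k (er_vt sg U) sg) T.
Proof.
elim/vty_flat_ind: T k U sg => [n||T T' D IH1 IH2|T1 D1 T2 D2 IH1 IH2|T IH|s T IH|T IH|p T IH]
  k U sg ks /=; rewrite ?IH1 ?IH2 ?IH ?size_map //.
- by rewrite nth_insert //; case_ifs.
- by rewrite er_vt_shS map_insert_nth.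
- by rewrite er_vt_shA0.
- by rewrite er_vt_shD.
Qed.

Lemma er_vt_substS0 T u sg :
  er_vt sg (vt_substS 0 u T) = sk_subst 0 u (er_vt (map (sk_shift 0) sg) T).
Proof. by rewrite -er_vt_substS -map_comp (eq_map (sk_shiftK 0 u)) map_id. Qed.

Lemma er_vt_substA0 T U sg : er_vt sg (vt_substA 0 U T) = er_vt (er_vt sg U :: sg) T.
Proof. by rewrite er_vt_substA // insert_nth0. Qed.

Definition er_cstr_eq (sg : seq skel) (p : cstr) : Prop :=
  if p is CSub T1 T2 then er_vt sg T1 = er_vt sg T2 else True.

Definition er_rho_eq (sg : seq skel) (r : rho) : Prop :=
  match r with RPi p => er_cstr_eq sg p | RC C1 C2 => er_ct sg C1 = er_ct sg C2 end.

(* The part of [ctx_wf] that erasure depends on.  Unlike [ctx_wf] it places no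
   condition on term variables, so it is preserved under the binders met in
   typing derivations. *)
Fixpoint ctx_ok (G : ctx) : Prop :=
  match G with
  | [::] => True
  | EA s :: G => wf_sk G s /\ ctx_ok G
  | EW p :: G => er_cstr_eq (sigma_of G) p /\ ctx_ok G
  | _ :: G => ctx_ok G
  end.

Lemma snS_er_ctx G : snS (er_ctx G) = nS G.
Proof. by elim: G => [|[|s|| T|p] G IH] //=; rewrite /snS /= -/(snS _) IH. Qed.

Lemma scls_ops_er sg h : scls_ops (er_hcl sg h) = cls_ops h.
Proof. by elim: h => //= op c r ->. Qed.

Lemma lookup_a_sigma G n s : lookup_a G n = Some s ->
  nth SUnit (sigma_of G) n = s /\ n < size (sigma_of G).
Proof.
elim: G n s => [|[|s0|| T|p] G IH] n s //=; try exact: IH.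
- case E: lookup_a => [s'|] //= [<-].
  by have [<- ns] := IH _ _ E; rewrite nth_map_skel ?size_map.
- by case: n => [[<-] | n /IH].
Qed.

Lemma lookup_a_sk_wf G n s : ctx_ok G -> lookup_a G n = Some s -> sk_wf (nS G) s.
Proof.
elim: G n s => [|[|s0|| T|p] G IH] n s //=.
- by move=> ok; case E: lookup_a => [s'|] //= [<-]; apply/sk_wf_shift/(IH _ _ ok E).
- by case=> s0_wf ok; case: n => [[<-] | n /IH]; auto.
- exact: IH.
- exact: IH.
- by case=> _; exact: IH.
Qed.

Lemma lookup_x_er G n T : lookup_x G n = Some T ->
  slookup_x (er_ctx G) n = Some (er_vt (sigma_of G) T).
Proof.
elim: G n T => [|[|s|| T0|p] G IH] n T //=; try exact: IH.
- by case E: lookup_x => [T'|] //= [<-]; rewrite (IH _ _ E) /= er_vt_shS.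
- by case E: lookup_x => [T'|] //= [<-]; rewrite (IH _ _ E) /= er_vt_shA0.
- by case E: lookup_x => [T'|] //= [<-]; rewrite (IH _ _ E) /= er_vt_shD.
- by case: n => [[<-] | n /IH].
Qed.

Lemma lookup_w_er G n p : ctx_ok G -> lookup_w G n = Some p -> er_cstr_eq (sigma_of G) p.
Proof.
elim: G n p => [|[|s|| T|p0] G IH] n p //=; try exact: IH.
- move=> ok; case E: lookup_w => [p'|] //= [<-].
  by case: p' E => [T1 T2|D1 D2] E //=; rewrite !er_vt_shS (IH _ _ ok E).
- case=> _ ok; case E: lookup_w => [p'|] //= [<-].
  by case: p' E => [T1 T2|D1 D2] E //=; rewrite !er_vt_shA0 (IH _ _ ok E).
- move=> ok; case E: lookup_w => [p'|] //= [<-].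
  by case: p' E => [T1 T2|D1 D2] E //=; rewrite !er_vt_shD (IH _ _ ok E).
- by case=> p0_ok ok; case: n => [[<-] | n /IH]; auto.
Qed.

Scheme wf_vt_mind := Minimality for wf_vt Sort Prop
 with wf_ct_mind := Minimality for wf_ct Sort Prop
 with wf_cs_mind := Minimality for wf_cs Sort Prop.
Combined Scheme wf_mutind from wf_vt_mind, wf_ct_mind, wf_cs_mind.

Scheme val_ty_mind := Minimality for val_ty Sort Prop
 with comp_ty_mind := Minimality for comp_ty Sort Prop
 with cls_ty_mind := Minimality for cls_ty Sort Prop.
Combined Scheme ty_mutind from val_ty_mind, comp_ty_mind, cls_ty_mind.

Section Erasure.
Variable S : sig.

Lemma er_wf_mut :
  (forall G T s, wf_vt S G T s -> forall sg, er_vt (sigma_of G ++ sg) T = s) /\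
  (forall G C s, wf_ct S G C s -> forall sg, er_ct (sigma_of G ++ sg) C = s) /\
  (forall G p, wf_cs S G p -> forall sg, er_cstr_eq (sigma_of G ++ sg) p).
Proof.
apply: wf_mutind => //=.
- by move=> G n s /lookup_a_sigma [<- ns] sg; rewrite nth_cat ns.
- by move=> G T C s1 s2 _ IH1 _ IH2 sg; rewrite IH1 IH2.
- by move=> G C1 C2 s1 s2 _ IH1 _ IH2 sg; rewrite IH1 IH2.
- by move=> G T s _ IH sg; rewrite map_cat IH.
- by move=> G T1 T2 s _ IH1 _ IH2 sg; rewrite IH1 IH2.
Qed.

Lemma er_wf_vt G T s sg : wf_vt S G T s -> er_vt (sigma_of G ++ sg) T = s.
Proof. by move/(proj1 er_wf_mut). Qed.

Lemma er_wf_vt0 G T s : wf_vt S G T s -> er_vt (sigma_of G) T = s.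
Proof. by move/(er_wf_vt [::]); rewrite cats0. Qed.

Lemma er_wf_cs G p : wf_cs S G p -> er_cstr_eq (sigma_of G) p.
Proof. by move/(proj2 (proj2 er_wf_mut))/(_ [::]); rewrite cats0. Qed.

Lemma wf_vt_sk_wf G T s : wf_vt S G T s -> ctx_ok G -> sk_wf (nS G) s.
Proof.
move: G T s; apply: (@wf_vt_mind S (fun G _ s => ctx_ok G -> sk_wf (nS G) s)
                                   (fun G _ s => ctx_ok G -> sk_wf (nS G) s)
                                   (fun _ _ => True)) => //=.
- by move=> G n s ns ok; apply: lookup_a_sk_wf ns.
- by move=> G T C s1 s2 _ IH1 _ IH2 ok; rewrite IH1 ?IH2.
- by move=> G C1 C2 s1 s2 _ IH1 _ IH2 ok; rewrite IH1 ?IH2.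
- by move=> G s1 T s2 s1_wf _ IH ok; apply: IH.
Qed.

Lemma ctx_wf_ok G : ctx_wf S G -> ctx_ok G.
Proof.
elim: G => [|[|s|| T|p] G IH] //=.
- by case=> ? /IH.
- by case=> _ /IH.
- by case=> /er_wf_cs ? /IH.
Qed.

Lemma er_vt_closed T s sg : wf_vt S [::] T s -> er_vt sg T = er_vt [::] T.
Proof. by move=> w; rewrite (er_wf_vt sg w) (er_wf_vt0 w). Qed.

Lemma co_ty_er G g r : co_ty S G g r -> ctx_ok G -> er_rho_eq (sigma_of G) r.
Proof.
elim=> {G g r} //=.
- by move=> G n p np ok; apply: lookup_w_er np.
- by move=> G g1 g2 T1 T2 C1 C2 _ IH1 _ IH2 ok; rewrite IH1 // IH2.
- by move=> G g1 g2 C1 C2 C3 C4 _ IH1 _ IH2 ok; rewrite -IH1 // IH2.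
- by move=> G g T1 T2 _ IH ok; rewrite IH.
- by move=> G s g T1 T2 s_wf _ IH ok; apply: IH.
Qed.

Hypothesis S_ok : sig_ok S.

Lemma er_sig_op sg op T1 T2 : S op = Some (T1, T2) ->
  er_sig S op = Some (er_vt sg T1, er_vt sg T2).
Proof.
move=> opT; have [[s1 w1] [s2 w2]] := S_ok opT.
by rewrite /er_sig opT /= (er_vt_closed sg w1) (er_vt_closed sg w2).
Qed.

Lemma er_typing :
  (forall G v T, val_ty S G v T -> ctx_ok G ->
     sval_ty (er_sig S) (er_ctx G) (er_val (sigma_of G) v) (er_vt (sigma_of G) T)) /\
  (forall G c C, comp_ty S G c C -> ctx_ok G ->
     scomp_ty (er_sig S) (er_ctx G) (er_comp (sigma_of G) c) (er_ct (sigma_of G) C)) /\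
  (forall G T D h, cls_ty S G T D h -> ctx_ok G ->
     scls_ty (er_sig S) (er_ctx G) (er_vt (sigma_of G) T) (er_hcl (sigma_of G) h)).
Proof.
apply: ty_mutind => /=.
- by move=> G n T nT ok; apply/STyVar/lookup_x_er.
- by move=> G ok; apply: STyUnit.
- move=> G T c C s _ IH w ok; apply: STyLam; first exact: IH.
  by rewrite snS_er_ctx (er_wf_vt0 w); apply: wf_vt_sk_wf w ok.
- by move=> G v g T1 T2 _ IH g_ty ok; rewrite -(co_ty_er g_ty ok); apply: IH.
- by move=> G v T _ IH ok; apply/STyLamS/IH.
- by move=> G s v T s_wf _ IH ok; apply: IH.
- by move=> G v T _ IH ok; apply: IH.
- by move=> G p v T _ IH p_wf ok; apply: IH (conj (er_wf_cs p_wf) ok).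
- by move=> G v g p T _ IH _ ok; apply: IH.
- move=> G v s T _ IH s_wf ok; rewrite er_vt_substS0.
  by apply: STyAppS; [apply: IH | rewrite snS_er_ctx].
- by move=> G v s T1 T2 _ IH w ok; rewrite er_vt_substA0 (er_wf_vt0 w); apply: IH.
- by move=> G v D T _ IH _ ok; rewrite er_vt_substD; apply: IH.
- move=> G Tx cr cls T D u _ IHc _ IHh ok.
  by apply: STyHand; [rewrite scls_ops_er | apply: IHc | apply: IHh].
- by move=> G v1 v2 T C _ IH1 _ IH2 ok; apply: STyApp (IH1 ok) (IH2 ok).
- by move=> G v c T C _ IH1 _ IH2 ok; apply: STyLet (IH1 ok) (IH2 ok).
- by move=> G v T _ IH ok; apply/STyRet/IH.
- by move=> G c1 c2 T1 T2 D _ IH1 _ IH2 ok; apply: STyDo (IH1 ok) (IH2 ok).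
- move=> G op v T1 T2 c T D opT _ IHv _ IHc _ ok.
  by apply: STyOp (er_sig_op _ opT) (IHv ok) (IHc ok).
- by move=> G v c C1 C2 _ IH1 _ IH2 ok; apply: STyWith (IH1 ok) (IH2 ok).
- by move=> G c g C1 C2 _ IH g_ty ok; rewrite -(co_ty_er g_ty ok); apply: IH.
- by move=> G T D ok; apply: SClNil.
- move=> G T D op c rest T1 T2 opT _ IHc _ IHr ok.
  by apply: SClCons (er_sig_op _ opT) (IHc ok) (IHr ok).
Qed.

End Erasure.

Unset Implicit Arguments.

Theorem theorem6p2 (S : sig) :
  sig_ok S ->
  (forall (G : ctx) (v : value) (T : vty),
      ctx_wf S G -> val_ty S G v T ->
      sval_ty (er_sig S) (er_ctx G) (er_val (sigma_of G) v) (er_vt (sigma_of G) T)) /\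
  (forall (G : ctx) (c : comput) (C : cty),
      ctx_wf S G -> comp_ty S G c C ->
      scomp_ty (er_sig S) (er_ctx G) (er_comp (sigma_of G) c) (er_ct (sigma_of G) C)).
Proof.
move=> S_ok; have [er_val_ty [er_comp_ty _]] := er_typing S_ok.
split=> G t T /ctx_wf_ok ok ty; [exact: er_val_ty ty ok | exact: er_comp_ty ty ok].
Qed.
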